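(* Let $D$ be a pv-monoid (idempotent, with symmetric valuation function), $P$ a nonempty finite set of ports, and let $\zeta=\bigoplus_{i\in I}\left(d_i\otimes\sum_{j\in J_i}m_{i,j}\right)\in PCL(D,P)$ be a formula in full normal form, where $I=\{1,\dots,n\}$. Then (i) $*\zeta\equiv\bigoplus_{\emptyset\neq I'\subseteq I}\left(\mathrm{val}(d_i)_{i\in I'}\otimes\left(\biguplus_{i\in I'}\sum_{j\in J_i}m_{i,j}\right)\right)$; (ii) $( *\zeta)\otimes\left(\biguplus_{i\in I}\sum_{j\in J_i}m_{i,j}\right)\equiv\mathrm{val}(d_1,\dots,d_n)\otimes\left(\biguplus_{i\in I}\sum_{j\in J_i}m_{i,j}\right)$. Here $\mathrm{val}(d_i)_{i\in I'}$ denotes $\mathrm{val}$ applied to the values $d_i$, $i\in I'$, in any order, and $\biguplus$ denotes iterated $\uplus$ (in any fixed bracketing).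
   Context: A valuation monoid $(D,\oplus,\mathrm{val},0)$ consists of a commutative monoid $(D,\oplus,0)$ and a map $\mathrm{val}:D^+\to D$ ($D^+$ = nonempty finite sequences over $D$) with $\mathrm{val}(d)=d$ and $\mathrm{val}(d_1,\dots,d_n)=0$ whenever some $d_i=0$. A pv-monoid $(D,\oplus,\mathrm{val},\otimes,0,1)$ is a valuation monoid with a binary operation $\otimes$ and an element $1$ such that $\mathrm{val}(1,\dots,1)=1$ for any $n\ge1$ arguments, $0\otimes d=d\otimes0=0$, $1\otimes d=d\otimes1=d$. Standing assumption: $D$ is idempotent ($d\oplus d=d$) and $\mathrm{val}$ is symmetric (invariant under permutation of arguments). $I(P)$ is the set of nonempty subsets of $P$, $C(P)$ the set of nonempty subsets of $I(P)$. PIL formulas: $\phi::=true\mid p\mid\overline{\phi}\mid\phi\vee\phi$ ($p\in P$), $\alpha\models_i p$ iff $p\in\alpha$, negation and disjunction as usual, $\wedge$ via De Morgan. A full monomial is a PIL formula $\bigwedge_{p\in P_+}p\wedge\bigwedge_{p\in P_-}\overline p$ with $P_+\cup P_-=P$, $P_+\cap P_-=\emptyset$. PCL formulas: $f::=true\mid\phi\mid\neg f\mid f\sqcup f\mid f+f$; $\gamma\models\phi$ iff every $\alpha\in\gamma$ satisfies $\phi$; $\neg,\sqcup$ are complement and union; $\gamma\models f_1+f_2$ iff $\gamma=\gamma_1\cup\gamma_2$ with $\gamma_1,\gamma_2\in C(P)$, $\gamma_1\models f_1,\gamma_2\models f_2$. $\sum$ denotes $+$-combination. w$_{\text{pvm}}$PCL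 formulas ($PCL(D,P)$): $\zeta::=d\mid f\mid\zeta\oplus\zeta\mid\zeta\otimes\zeta\mid\zeta\uplus\zeta\mid *\zeta$; semantics $\|\zeta\|:C(P)\to D$: $\|d\|(\gamma)=d$; $\|f\|(\gamma)\in\{0,1\}$ is $1$ iff $\gamma\models f$; $\oplus,\otimes$ pointwise; $\|\zeta_1\uplus\zeta_2\|(\gamma)=\bigoplus(\|\zeta_1\|(\gamma_1)\otimes\|\zeta_2\|(\gamma_2))$ over disjoint $\gamma_1,\gamma_2\in C(P)$ with union $\gamma$; $\|*\zeta\|(\gamma)=\bigoplus_{n>0}\bigoplus\mathrm{val}(\|\zeta\|(\gamma_1),\dots,\|\zeta\|(\gamma_n))$ over pairwise disjoint $\gamma_1,\dots,\gamma_n\in C(P)$ with union $\gamma$. $\equiv$ means equality of semantics on all of $C(P)$. A formula $\bigoplus_{i\in I}\left(d_i\otimes\sum_{j\in J_i}m_{i,j}\right)$ (finite nonempty index sets, $d_i\in D$, full monomials $m_{i,j}$) is in full normal form; full normal forms are required to satisfy: (i) $j\ne j'$ implies $m_{i,j}\not\equiv m_{i,j'}$; (ii) $i\ne i'$ implies $\sum_{j\in J_i}m_{i,j}\not\equiv\sum_{j\in J_{i'}}m_{i',j}$. *)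

From mathcomp Require Import all_boot.
From Stdlib Require Import Permutation.

Set Implicit Arguments.
Unset Strict Implicit.
Unset Printing Implicit Defensive.

Record pvMonoid := PvMonoid {
  pv_car :> Type;
  pv_add : pv_car -> pv_car -> pv_car;
  pv_zero : pv_car;
  pv_val : seq pv_car -> pv_car;   (* only used on nonempty sequences *)
  pv_mul : pv_car -> pv_car -> pv_car;
  pv_one : pv_car;
  pv_addA : forall a b c, pv_add a (pv_add b c) = pv_add (pv_add a b) c;
  pv_addC : forall a b, pv_add a b = pv_add b a;
  pv_add0 : forall a, pv_add pv_zero a = a;
  pv_val1 : forall d, pv_val [:: d] = d;
  pv_val0 : forall s1 s2, pv_val (s1 ++ pv_zero :: s2) = pv_zero;
  pv_val_one : forall n, pv_val (nseq n.+1 pv_one) = pv_one;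
  pv_mul0l : forall d, pv_mul pv_zero d = pv_zero;
  pv_mul0r : forall d, pv_mul d pv_zero = pv_zero;
  pv_mul1l : forall d, pv_mul pv_one d = d;
  pv_mul1r : forall d, pv_mul d pv_one = d
}.

Definition pv_idempotent (D : pvMonoid) := forall d : D, pv_add d d = d.
Definition pv_symmetric (D : pvMonoid) :=
  forall s t : seq D, Permutation s t -> pv_val s = pv_val t.

Inductive pil (P : Type) :=
  | PTrue
  | PVar of P
  | PNeg of pil P
  | POr of pil P & pil P.

Definition PAnd (P : Type) (a b : pil P) : pil P := PNeg (POr (PNeg a) (PNeg b)).

Inductive pcl (P : Type) :=
  | CTrue
  | CPil of pil P
  | CNeg of pcl P
  | COr of pcl P & pcl P
  | CPlus of pcl P & pcl P.

Inductive wpcl (D : Type) (P : Type) :=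
  | WConst of D
  | WPcl of pcl P
  | WOplus of wpcl D P & wpcl D P
  | WOtimes of wpcl D P & wpcl D P
  | WUplus of wpcl D P & wpcl D P
  | WStar of wpcl D P.

Fixpoint iter_op (T : Type) (op : T -> T -> T) (x : T) (s : seq T) : T :=
  match s with
  | [::] => x
  | y :: s' => op x (iter_op op y s')
  end.

Definition big_op (T : Type) (op : T -> T -> T) (dflt : T) (s : seq T) : T :=
  match s with
  | [::] => dflt
  | x :: s' => iter_op op x s'
  end.

Section Semantics.
Variable P : finType.

(* full monomial with positive part A (literals in the order of enum P) *)
Definition lit (A : {set P}) (p : P) : pil P :=
  if p \in A then PVar p else PNeg (PVar p).
Definition fullmon (A : {set P}) : pil P :=
  big_op (@PAnd P) (PTrue P) [seq lit A p | p <- enum P].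

Fixpoint psat (phi : pil P) (a : {set P}) : bool :=
  match phi with
  | PTrue => true
  | PVar p => p \in a
  | PNeg phi' => ~~ psat phi' a
  | POr phi1 phi2 => psat phi1 a || psat phi2 a
  end.

(* C(P): nonempty sets of nonempty subsets of P *)
Definition inCP (g : {set {set P}}) : bool := (g != set0) && (set0 \notin g).

Fixpoint csat (f : pcl P) (g : {set {set P}}) : bool :=
  match f with
  | CTrue => true
  | CPil phi => [forall a in g, psat phi a]
  | CNeg f' => ~~ csat f' g
  | COr f1 f2 => csat f1 g || csat f2 g
  | CPlus f1 f2 => [exists g1 : {set {set P}}, exists g2 : {set {set P}},
        [&& inCP g1, inCP g2, g1 :|: g2 == g, csat f1 g1 & csat f2 g2]]
  end.

Variable D : pvMonoid.

Definition is_decomp (g : {set {set P}}) (n : nat) (t : n.-tuple {set {set P}}) : bool :=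
  [&& [forall i : 'I_n, inCP (tnth t i)],
      [forall i : 'I_n, forall j : 'I_n, (i != j) ==> [disjoint tnth t i & tnth t j]]
    & \bigcup_(i < n) tnth t i == g].

Fixpoint sem (z : wpcl D P) (g : {set {set P}}) : D :=
  match z with
  | WConst d => d
  | WPcl f => if csat f g then pv_one D else pv_zero D
  | WOplus z1 z2 => pv_add (sem z1 g) (sem z2 g)
  | WOtimes z1 z2 => pv_mul (sem z1 g) (sem z2 g)
  | WUplus z1 z2 =>
      \big[@pv_add D/pv_zero D]_(g1 : {set {set P}})
       \big[@pv_add D/pv_zero D]_(g2 : {set {set P}} |
            [&& inCP g1, inCP g2, [disjoint g1 & g2] & g1 :|: g2 == g])
          pv_mul (sem z1 g1) (sem z2 g2)
  | WStar z1 =>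
      (* n > #|g| admits no decomposition, so this is the sum over all n > 0 *)
      \big[@pv_add D/pv_zero D]_(1 <= n < #|g|.+1)
       \big[@pv_add D/pv_zero D]_(t : n.-tuple {set {set P}} | is_decomp g t)
          pv_val [seq sem z1 gi | gi <- t]
  end.

Definition wequiv (z1 z2 : wpcl D P) : Prop :=
  forall g : {set {set P}}, inCP g -> sem z1 g = sem z2 g.

(* sum_{j} m_{i,j} for a nonempty list of positive parts of full monomials *)
Definition msum (s : seq {set P}) : pcl P :=
  big_op (@CPlus P) (CTrue P) [seq CPil (fullmon A) | A <- s].

Definition woplus_big (s : seq (wpcl D P)) : wpcl D P :=
  big_op (@WOplus D P) (WConst P (pv_zero D)) s.
Definition wuplus_big (s : seq (wpcl D P)) : wpcl D P :=
  big_op (@WUplus D P) (WConst P (pv_zero D)) s.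

Definition fnf_formula (n : nat) (d : 'I_n -> D) (m : 'I_n -> seq {set P}) : wpcl D P :=
  woplus_big [seq WOtimes (WConst P (d i)) (WPcl D (msum (m i))) | i <- enum 'I_n].

Definition is_full_normal_form (n : nat) (m : 'I_n -> seq {set P}) : Prop :=
  0 < n /\
  (forall i, 0 < size (m i)) /\
  (forall i j j', j < size (m i) -> j' < size (m i) -> j != j' ->
     ~ wequiv (WPcl D (CPil (fullmon (nth set0 (m i) j))))
              (WPcl D (CPil (fullmon (nth set0 (m i) j'))))) /\
  (forall i i', i != i' -> ~ wequiv (WPcl D (msum (m i))) (WPcl D (msum (m i')))).

End Semantics.

(* Every block formula sum_j m_{i,j} holds exactly on the configuration set
   S_i = {m_{i,j} | j}, so zeta evaluates to d_i on S_i and to 0 on every other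
   configuration set (the S_i are pairwise distinct by condition (ii) of the
   normal form).  Hence a decomposition of gamma contributes to *zeta only if
   its parts are blocks S_i; they are then pairwise disjoint, so their indices
   form a set I' whose blocks tile gamma, and by symmetry of val the
   contribution is val(d_i)_{i in I'}.  On the other side, the I'-summand is
   val(d_i)_{i in I'} exactly when the S_i, i in I', tile gamma.  For (ii), a
   configuration set tiled by all the blocks is tiled by no proper subfamily.
   Sums are compared through the order x <= y iff x (+) y = y of the
   idempotent monoid (D, (+)). *)

From HB Require Import structures.
From mathcomp Require Import all_boot.
From Stdlib Require Import Permutation.
Set Implicit Arguments. Unset Strict Implicit. Unset Printing Implicit Defensive.

Lemma perm_eq_Permutation (T : eqType) (s t : seq T) : perm_eq s t -> Permutation s t.
Proof.
elim: s t => [|x s IHs] t; first by rewrite perm_sym => /perm_nilP ->.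
move=> eq_st; have xt : x \in t by rewrite -(perm_mem eq_st) mem_head.
case/splitPr: xt eq_st => t1 t2.
rewrite perm_sym -[x :: t2]cat1s perm_catCA /= perm_cons perm_sym => /IHs.
by move/(perm_skip x)/Permutation_trans; apply; apply: Permutation_middle.
Qed.

Lemma pairwise_catC (T : Type) (r : rel T) (s t : seq T) :
  symmetric r -> pairwise r (s ++ t) = pairwise r (t ++ s).
Proof.
move=> r_sym; have allrel_ts : allrel r t s = allrel r s t.
  by rewrite allrelC; apply: eq_allrel => x y; apply: r_sym.
by rewrite !pairwise_cat allrel_ts [pairwise r t && _]andbC.
Qed.

Lemma perm_pairwise (T : eqType) (r : rel T) (s t : seq T) :
  symmetric r -> perm_eq s t -> pairwise r s = pairwise r t.
Proof.
move=> r_sym; elim: s t => [|x s IHs] t; first by rewrite perm_sym => /perm_nilP ->.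
move=> eq_st; have xt : x \in t by rewrite -(perm_mem eq_st) mem_head.
case/splitPr: xt eq_st => t1 t2.
rewrite pairwise_catC // perm_sym perm_catC /= perm_cons perm_sym => eq_st.
by rewrite (IHs _ eq_st) (perm_all _ eq_st).
Qed.

Lemma pairwise_in (T : eqType) (r : rel T) (s : seq T) :
  symmetric r -> pairwise r s -> {in s &, forall x y, x != y -> r x y}.
Proof.
move=> r_sym; elim: s => // z s IHs; rewrite pairwise_cons => /andP [/allP r_z /IHs r_s] x y.
rewrite !inE => /predU1P [-> | xs] /predU1P [-> | ys]; rewrite ?eqxx //.
- by move=> _; apply: r_z.
- by move=> _; rewrite r_sym; apply: r_z.
- exact: r_s.
Qed.

Lemma codom_map (T : finType) (U : eqType) (f : T -> U) (s : seq U) :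
  all (mem (codom f)) s -> exists l, s = map f l.
Proof.
elim: s => [|y s IHs] /=; first by exists [::].
by case/andP => /codomP [x ->] /IHs [l ->]; exists (x :: l).
Qed.

Lemma mem_bigcup_seq (T : finType) (I : Type) (F : I -> {set T}) (l : seq I) x :
  (x \in \bigcup_(i <- l) F i) = has (fun i => x \in F i) l.
Proof. by elim: l => [|i l IHl]; rewrite ?big_nil ?in_set0 // big_cons in_setU IHl. Qed.

Lemma disjoint_bigcup_seq (T : finType) (I : Type) (B : {set T}) (F : I -> {set T}) l :
  [disjoint B & \bigcup_(i <- l) F i] = all (fun i => [disjoint B & F i]) l.
Proof.
elim: l => [|i l IHl]; rewrite ?big_nil ?big_cons -setI_eq0 ?setI0 ?eqxx //.
by rewrite setIUr setU_eq0 !setI_eq0 IHl.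
Qed.

HB.instance Definition _ (D : pvMonoid) :=
  Monoid.isComLaw.Build (pv_car D) (pv_zero D) (@pv_add D) (@pv_addA D) (@pv_addC D) (@pv_add0 D).

Section IdempotentSum.
Variable D : pvMonoid.
Hypothesis idem : pv_idempotent D.

Local Notation "x + y" := (pv_add x y).
Local Notation "0" := (pv_zero D).

Definition pv_le (x y : D) := x + y = y.

Lemma pv_le0 x : pv_le 0 x. Proof. exact: pv_add0. Qed.
Lemma pv_le_refl x : pv_le x x. Proof. exact: idem. Qed.
Lemma pv_le_anti x y : pv_le x y -> pv_le y x -> x = y.
Proof. by rewrite /pv_le pv_addC => -> . Qed.
Lemma pv_le_trans x y z : pv_le x y -> pv_le y z -> pv_le x z.
Proof. by rewrite /pv_le => xy <-; rewrite pv_addA xy. Qed.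
Lemma pv_le_addl x y : pv_le x (x + y). Proof. by rewrite /pv_le pv_addA idem. Qed.

Lemma pv_big_le (I : eqType) (r : seq I) (Pr : pred I) (F : I -> D) y :
  (forall i, i \in r -> Pr i -> pv_le (F i) y) ->
  pv_le (\big[@pv_add D/0]_(i <- r | Pr i) F i) y.
Proof.
move=> F_le; rewrite big_seq_cond; apply: (big_ind (pv_le^~ y)) => [|a b|i /andP []].
- exact: pv_le0.
- by rewrite /pv_le => a_le b_le; rewrite -pv_addA b_le a_le.
- exact: F_le.
Qed.

Lemma pv_le_big (I : eqType) (r : seq I) (Pr : pred I) (F : I -> D) i y :
  i \in r -> Pr i -> pv_le y (F i) -> pv_le y (\big[@pv_add D/0]_(j <- r | Pr j) F j).
Proof.
by move=> ri Pri yF; rewrite (big_rem _ ri) Pri; apply: pv_le_trans yF (pv_le_addl _ _).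
Qed.

End IdempotentSum.

Section Indicator.
Variable D : pvMonoid.
Local Notation "x + y" := (@pv_add D x y).
Local Notation "0" := (pv_zero D).

Definition pv_ind (b : bool) : D := if b then pv_one D else 0.

Lemma pv_ind_and a b : pv_mul (pv_ind a) (pv_ind b) = pv_ind (a && b).
Proof. by case: a; case: b; rewrite /= ?pv_mul1l ?pv_mul0l. Qed.

Lemma pv_ind_or : pv_idempotent D -> {morph pv_ind : a b / a || b >-> a + b}.
Proof. by move=> idem [] [] /=; rewrite /pv_ind ?idem // ?pv_add0 // pv_addC pv_add0. Qed.

Lemma big_pv_ind (I : finType) (Pr B : pred I) : pv_idempotent D ->
  \big[@pv_add D/0]_(i | Pr i) pv_ind (B i) = pv_ind [exists (i | Pr i), B i].
Proof.
by move=> idem; rewrite -big_orE (big_morph _ (pv_ind_or idem) (erefl : pv_ind false = 0)).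
Qed.

Lemma pv_val_map0 (T : eqType) (F : T -> D) (s : seq T) x :
  x \in s -> F x = 0 -> pv_val (map F s) = 0.
Proof. by case/splitPr: s / => s1 s2 Fx0; rewrite map_cat /= Fx0 pv_val0. Qed.

Lemma big_mul_ind_inj (I : finType) (T : eqType) (c : I -> D) (A : I -> T) i :
  injective A -> \big[@pv_add D/0]_(j <- enum I) pv_mul (c j) (pv_ind (A i == A j)) = c i.
Proof.
move=> A_inj; rewrite big_enum /= (bigD1 i) //= eqxx pv_mul1r big1 ?Monoid.mulm1 // => j ji.
by rewrite (inj_eq A_inj) eq_sym (negPf ji) pv_mul0r.
Qed.

Lemma big_mul_ind_out (I : finType) (T : eqType) (c : I -> D) (A : I -> T) x :
  x \notin codom A -> \big[@pv_add D/0]_(j <- enum I) pv_mul (c j) (pv_ind (x == A j)) = 0.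
Proof.
move=> x_out; rewrite big1_seq // => j _; case: eqP x_out => [-> | _ _]; last exact: pv_mul0r.
by rewrite codom_f.
Qed.

End Indicator.

Section Satisfaction.
Variable P : finType.
Implicit Types (A a : {set P}) (g h : {set {set P}}).

Lemma psat_big_and (s : seq (pil P)) a :
  psat (big_op (@PAnd P) (PTrue P) s) a = all (fun phi => psat phi a) s.
Proof.
case: s => [|x s] //=; elim: s x => [|y s IHs] x /=; first by rewrite andbT.
by rewrite negb_or !negbK IHs.
Qed.

Lemma psat_fullmon A a : psat (fullmon A) a = (a == A).
Proof.
rewrite psat_big_and all_map; apply/allP/eqP => [a_sat | -> p _]; last first.
  by rewrite /= /lit; case: ifP => /= ->.
apply/setP => p; have /= := a_sat p (mem_enum _ p); rewrite /lit.
by case: (p \in A) => [// | /negPf].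
Qed.

Lemma csat_fullmon A g : inCP g -> csat (CPil (fullmon A)) g = (g == [set A]).
Proof.
case/andP => /set0Pn [a ag] _ /=; apply/forall_inP/eqP => [g_sat | -> b]; last first.
  by rewrite in_set1 psat_fullmon.
apply/setP => b; rewrite in_set1; apply/idP/eqP => [/g_sat | ->].
  by rewrite psat_fullmon => /eqP.
by have := g_sat a ag; rewrite psat_fullmon => /eqP <-.
Qed.

Lemma inCP_sub g h : h != set0 -> h \subset g -> inCP g -> inCP h.
Proof. by move=> h0 hg /andP [_ g0]; rewrite /inCP h0; apply: contra g0; apply: (subsetP hg). Qed.

Lemma csat_msum s g : s != [::] -> inCP g -> csat (msum s) g = (g == [set A in s]).
Proof.
elim: s g => // A s IHs g _ gCP; case: s IHs => [|B s] IHs.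
  by rewrite [msum _]/= csat_fullmon //; congr (_ == _); apply/setP => x; rewrite !inE.
have -> : msum [:: A, B & s] = CPlus (CPil (fullmon A)) (msum (B :: s)) by [].
apply/existsP/eqP => [[g1 /existsP [g2 /and5P [g1CP g2CP /eqP <- g1_sat g2_sat]]] | g_def].
  have /eqP -> : g1 == [set A] by rewrite -csat_fullmon.
  have /eqP -> : g2 == [set A0 in B :: s] by rewrite -IHs.
  by apply/setP => x; rewrite !inE.
have sub_g h : h \subset [set A0 in [:: A, B & s]] -> h \subset g by rewrite g_def.
have A_CP : inCP [set A].
  apply: inCP_sub gCP; first by apply/set0Pn; exists A; rewrite inE.
  by apply: sub_g; rewrite sub1set inE mem_head.
have Bs_CP : inCP [set A0 in B :: s].
  apply: inCP_sub gCP; first by apply/set0Pn; exists B; rewrite inE mem_head.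
  by apply/sub_g/subsetP => x; rewrite !inE => ->; rewrite orbT.
have A_sat : csat (CPil (fullmon A)) [set A] by rewrite csat_fullmon.
have Bs_sat : csat (msum (B :: s)) [set A0 in B :: s] by rewrite IHs.
exists [set A]; apply/existsP; exists [set A0 in B :: s]; apply/and5P; split => //.
by rewrite g_def; apply/eqP/setP => x; rewrite !inE.
Qed.

End Satisfaction.

Section Tiling.
Variable P : finType.
Implicit Types g : {set {set P}}.

Definition tiling (I : Type) (A : I -> {set {set P}}) (l : seq I) g : bool :=
  [&& all (fun i => inCP (A i)) l, pairwise [rel i j | [disjoint A i & A j]] l
    & \bigcup_(i <- l) A i == g].

Section Family.
Variables (I : Type) (A : I -> {set {set P}}).

Lemma tiling_cons i l g :
  tiling A (i :: l) g = [&& inCP (A i), [disjoint A i & \bigcup_(j <- l) A j],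
                            tiling A l (\bigcup_(j <- l) A j) & g == A i :|: \bigcup_(j <- l) A j].
Proof.
rewrite /tiling /= big_cons disjoint_bigcup_seq eqxx andbT eq_sym.
by case: (inCP (A i)) (all (fun j => inCP (A j)) l) => [] [] //=; rewrite ?andbF -?andbA.
Qed.

Lemma tiling_inCP i l g : tiling A (i :: l) g -> inCP g.
Proof.
rewrite tiling_cons => /and4P [/andP [/set0Pn [B Bi] i0] _ /and3P [lCP _ _] /eqP ->].
rewrite /inCP in_setU negb_or i0 mem_bigcup_seq; apply/and3P; split => //.
  by apply/set0Pn; exists B; rewrite in_setU Bi.
by rewrite -all_predC; apply: sub_all lCP => j /andP [].
Qed.

Lemma tiling_size l g : tiling A l g -> size l <= #|g|.
Proof.
elim: l g => // i l IHl g; rewrite tiling_cons => /and4P [/andP [i_ne0 _] dis /IHl l_le /eqP ->].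
by rewrite cardsU (disjoint_setI0 dis) cards0 subn0 /= -add1n leq_add // card_gt0.
Qed.

Lemma tiling_map (J : Type) (f : J -> I) l g : tiling A (map f l) g = tiling (A \o f) l g.
Proof. by rewrite /tiling all_map pairwise_map big_map. Qed.

End Family.

Section EqFamily.
Variables (I : eqType) (A : I -> {set {set P}}).

Lemma tiling_uniq l g : tiling A l g -> uniq l.
Proof.
case/and3P => lCP l_dis _; rewrite uniq_pairwise.
apply: (sub_in_pairwise (P := fun i => inCP (A i))) lCP l_dis => i j /andP [i_ne0 _] _.
by apply: contraTneq => <- /=; rewrite -setI_eq0 setIid.
Qed.

Lemma perm_tiling l l' g : perm_eq l l' -> tiling A l g = tiling A l' g.
Proof.
move=> eq_ll'; rewrite /tiling (perm_all _ eq_ll') (perm_big _ eq_ll').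
by rewrite (perm_pairwise _ eq_ll') // => i j; apply: disjoint_sym.
Qed.

Lemma tiling_subset l l' g :
  tiling A l g -> tiling A l' g -> {subset l' <= l} -> {subset l <= l'}.
Proof.
case/and3P => lCP l_dis /eqP l_g /and3P [_ _ /eqP l'_g] l'l i il.
have /andP [/set0Pn [B Bi] _] := allP lCP i il.
have : B \in g by rewrite -l_g mem_bigcup_seq; apply/hasP; exists i.
rewrite -l'_g mem_bigcup_seq => /hasP [j jl' Bj]; have [-> // | ij] := eqVneq i j.
have dis_sym : symmetric [rel i j | [disjoint A i & A j]] by move=> ? ?; apply: disjoint_sym.
by have /disjointFr/(_ Bi) := pairwise_in dis_sym l_dis il (l'l j jl') ij; rewrite Bj.
Qed.

End EqFamily.

Lemma is_decompE k (t : k.-tuple {set {set P}}) g : is_decomp g t = tiling id t g.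
Proof.
rewrite /is_decomp /tiling big_tuple; congr [&& _, _ & _]; first exact/forallP/all_tnthP.
apply/forallP/(pairwiseP set0) => [t_dis i j | t_dis i].
  rewrite !inE size_tuple => ik jk ij; have := forallP (t_dis (Ordinal ik)) (Ordinal jk).
  by rewrite -val_eqE /= (ltn_eqF ij) !(tnth_nth set0).
apply/forallP => j; apply/implyP; rewrite -val_eqE neq_ltn !(tnth_nth set0) /=.
by case/orP => [ij | ji]; last rewrite disjoint_sym; apply: t_dis; rewrite ?inE ?size_tuple.
Qed.

End Tiling.

Section Semantics.
Variables (P : finType) (D : pvMonoid).
Implicit Types g h : {set {set P}}.
Hypothesis idem : pv_idempotent D.
Local Notation "0" := (pv_zero D).

Lemma sem_woplus_big (s : seq (wpcl D P)) g :
  sem (woplus_big s) g = \big[@pv_add D/0]_(z <- s) sem z g.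
Proof.
case: s => [|z s]; first by rewrite big_nil.
by elim: s z => [|z' s IHs] z; rewrite ?big_seq1 // big_cons -IHs.
Qed.

Lemma sem_msum (s : seq {set P}) g :
  s != [::] -> inCP g -> sem (WPcl D (msum s)) g = pv_ind D (g == [set A in s]).
Proof. by move=> s_ne0 gCP; rewrite /= csat_msum. Qed.

Lemma sem_WConst (v : D) g : sem (WConst P v) g = v.
Proof. by []. Qed.

Lemma sem_WOtimes (z1 z2 : wpcl D P) g : sem (WOtimes z1 z2) g = pv_mul (sem z1 g) (sem z2 g).
Proof. by []. Qed.

Lemma sem_WUplus (z1 z2 : wpcl D P) g : sem (WUplus z1 z2) g =
  \big[@pv_add D/0]_g1
   \big[@pv_add D/0]_(g2 | [&& inCP g1, inCP g2, [disjoint g1 & g2] & g1 :|: g2 == g])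
     pv_mul (sem z1 g1) (sem z2 g2).
Proof. by []. Qed.

Lemma sem_WStar (z : wpcl D P) g : sem (WStar z) g =
  \big[@pv_add D/0]_(1 <= k < #|g|.+1)
   \big[@pv_add D/0]_(t : k.-tuple {set {set P}} | is_decomp g t)
     pv_val [seq sem z gi | gi <- t].
Proof. by []. Qed.

Lemma sem_wuplus_big (I : Type) (z : I -> wpcl D P) (A : I -> {set {set P}}) i l g :
  (forall j h, inCP h -> sem (z j) h = pv_ind D (h == A j)) -> inCP g ->
  sem (wuplus_big (map z (i :: l))) g = pv_ind D (tiling A (i :: l) g).
Proof.
move=> sem_z; elim: l i g => [|j l IHl] i g gCP.
  rewrite /= sem_z // /tiling /= big_seq1 andbT [A i == g]eq_sym.
  by case: eqP => [<- | _]; rewrite ?gCP ?andbF.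
have -> : wuplus_big (map z [:: i, j & l]) = WUplus (z i) (wuplus_big (map z (j :: l))) by [].
rewrite sem_WUplus.
under eq_bigr => g1 _ do [under eq_bigr => g2 /and4P [g1CP g2CP _ _]
  do rewrite sem_z // IHl // pv_ind_and; rewrite (big_pv_ind _ _ idem)].
rewrite (big_pv_ind _ _ idem) tiling_cons; congr (pv_ind D _).
apply/existsP/and4P => [[g1 /existsP [g2 /andP [/and4P [g1CP _ dis /eqP <-] /andP [/eqP g1E tl]]]]
                       | [iCP dis tl /eqP g_def]].
  by subst g1; move: (tl) => /and3P [_ _ /eqP ->].
exists (A i); apply/existsP; exists (\bigcup_(k <- j :: l) A k).
by rewrite iCP (tiling_inCP tl) dis g_def tl !eqxx.
Qed.

Lemma sem_fnf_formula n (d : 'I_n -> D) (m : 'I_n -> seq {set P}) g :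
  (forall i, m i != [::]) -> inCP g ->
  sem (fnf_formula d m) g =
    \big[@pv_add D/0]_(i <- enum 'I_n) pv_mul (d i) (pv_ind D (g == [set A in m i])).
Proof.
move=> m_ne0 gCP; rewrite sem_woplus_big big_map; apply: eq_bigr => i _.
by rewrite -(sem_msum (m_ne0 i) gCP).
Qed.

End Semantics.

Section Star.
Variables (P : finType) (D : pvMonoid).
Hypotheses (idem : pv_idempotent D) (symm : pv_symmetric D).
Variables (I : finType) (z : wpcl D P) (A : I -> {set {set P}}) (c : I -> D).
Hypothesis sem_z_A : forall i, inCP (A i) -> sem z (A i) = c i.
Hypothesis sem_z_out : forall g, inCP g -> g \notin codom A -> sem z g = pv_zero D.
Implicit Types g : {set {set P}}.

Local Notation star_tilings g :=
  (\big[@pv_add D/pv_zero D]_(I' <- enum [set I' : {set I} | I' != set0])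
     pv_mul (pv_val (map c (enum I'))) (pv_ind D (tiling A (enum I') g))).

Lemma sem_tiling_blocks l g : tiling A l g -> map (sem z) (map A l) = map c l.
Proof.
case/and3P => /allP lCP _ _; rewrite -map_comp; apply/eq_in_map => i il.
exact/sem_z_A/lCP.
Qed.

Lemma star_term_le_tilings s g :
  s != [::] -> tiling id s g -> pv_le (pv_val (map (sem z) s)) (star_tilings g).
Proof.
move=> s_ne0 s_tiles.
have [/codom_map [l s_def] | /allPn [B Bs B_out]] := boolP (all (mem (codom A)) s); last first.
  rewrite (pv_val_map0 Bs); first exact: pv_le0.
  apply: sem_z_out => //.
  by case/and3P: s_tiles => /allP/(_ B Bs).
subst s; rewrite tiling_map in s_tiles.
have eq_l : perm_eq l (enum [set i in l]).
  by apply: uniq_perm (tiling_uniq s_tiles) (enum_uniq _) _ => i; rewrite mem_enum inE.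
apply: (pv_le_big idem (i := [set i in l])) => //.
  rewrite mem_enum !inE; apply/set0Pn; case: l s_ne0 {s_tiles eq_l} => // i l _.
  by exists i; rewrite inE mem_head.
rewrite -(perm_tiling _ _ eq_l) s_tiles pv_mul1r (sem_tiling_blocks s_tiles).
rewrite (symm (Permutation_map c (perm_eq_Permutation eq_l))); exact: pv_le_refl.
Qed.

Lemma tilings_term_le_star (I' : {set I}) g : I' != set0 ->
  pv_le (pv_mul (pv_val (map c (enum I'))) (pv_ind D (tiling A (enum I') g))) (sem (WStar z) g).
Proof.
move=> I'_ne0; have [I'_tiles | _] := boolP (tiling A (enum I') g); last first.
  by rewrite pv_mul0r; apply: pv_le0.
rewrite pv_mul1r sem_WStar.
pose t := map_tuple A (in_tuple (enum I')).
have t_dec : is_decomp g t by rewrite is_decompE tiling_map.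
apply: (pv_le_big idem (i := size (enum I'))) => //.
  by rewrite mem_index_iota ltnS (tiling_size I'_tiles) andbT -cardE card_gt0.
apply: (pv_le_big idem (i := t)) => //; first exact: mem_index_enum.
rewrite (sem_tiling_blocks I'_tiles); exact: pv_le_refl.
Qed.

Lemma sem_star_tilings g : sem (WStar z) g = star_tilings g.
Proof.
apply: pv_le_anti.
  rewrite sem_WStar; apply: pv_big_le => k; rewrite mem_index_iota => /andP [k_gt0 _] _.
  apply: pv_big_le => t _; rewrite is_decompE; apply: star_term_le_tilings.
  by rewrite -size_eq0 size_tuple -lt0n.
by apply: pv_big_le => I'; rewrite mem_enum inE => I'_ne0 _; apply: tilings_term_le_star.
Qed.

Lemma sem_star_full_tiling g : inCP g -> tiling A (enum I) g ->
  sem (WStar z) g = pv_val (map c (enum I)).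
Proof.
move=> gCP I_tiles; rewrite sem_star_tilings; apply: pv_le_anti.
  apply: pv_big_le => I' _ _; have [I'_tiles | _] := boolP (tiling A (enum I') g); last first.
    by rewrite pv_mul0r; apply: pv_le0.
  have -> : I' = setT.
    apply/setP => i; rewrite inE -mem_enum; apply: (tiling_subset I_tiles I'_tiles).
      by move=> j _; rewrite mem_enum.
    by rewrite mem_enum.
  rewrite enum_setT -enumT pv_mul1r; exact: pv_le_refl.
have setT_ne0 : [set: I] != set0.
  case/andP: gCP => /set0Pn [B]; case/and3P: I_tiles => _ _ /eqP <-.
  by rewrite mem_bigcup_seq => /hasP [i _ _] _; apply/set0Pn; exists i; rewrite inE.
apply: (pv_le_big idem (i := setT)); first by rewrite mem_enum inE.
  by [].
by rewrite enum_setT -enumT I_tiles pv_mul1r; apply: pv_le_refl.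
Qed.

End Star.

Theorem mainTheorem15 (D : pvMonoid) (P : finType) (n : nat)
    (d : 'I_n -> D) (m : 'I_n -> seq {set P}) :
  pv_idempotent D -> pv_symmetric D -> 0 < #|P| ->
  is_full_normal_form D m ->
  wequiv (WStar (fnf_formula d m))
    (woplus_big
       [seq WOtimes (WConst P (pv_val [seq d i | i <- enum I']))
                    (wuplus_big [seq WPcl D (msum (m i)) | i <- enum I'])
       | I' : {set 'I_n} <- enum [set I' : {set 'I_n} | I' != set0]])
  /\
  wequiv (WOtimes (WStar (fnf_formula d m))
                  (wuplus_big [seq WPcl D (msum (m i)) | i <- enum 'I_n]))
         (WOtimes (WConst P (pv_val [seq d i | i <- enum 'I_n]))
                  (wuplus_big [seq WPcl D (msum (m i)) | i <- enum 'I_n])).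
Proof.
move=> idem symm _ [n_gt0 [m_gt0 [_ m_dist]]].
have m_ne0 i : m i != [::] by rewrite -size_eq0 -lt0n.
pose S i := [set A in m i].
have S_inj : injective S.
  move=> i i' S_ii'; apply/eqP/negPn/negP => /m_dist; apply=> g gCP.
  by rewrite !(sem_msum D (m_ne0 _) gCP); congr (pv_ind D (g == _)); apply: S_ii'.
have Z_S i : inCP (S i) -> sem (fnf_formula d m) (S i) = d i.
  by move=> SiCP; rewrite sem_fnf_formula // big_mul_ind_inj.
have Z_out g : inCP g -> g \notin codom S -> sem (fnf_formula d m) g = pv_zero D.
  by move=> gCP g_out; rewrite sem_fnf_formula // big_mul_ind_out.
have sem_blocks (l : seq 'I_n) g : l != [::] -> inCP g ->
    sem (wuplus_big [seq WPcl D (msum (m i)) | i <- l]) g = pv_ind D (tiling S l g).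
  by case: l => // i l _ gCP; apply: sem_wuplus_big => // j h; apply: sem_msum.
split => g gCP.
  rewrite (sem_star_tilings idem symm Z_S Z_out) sem_woplus_big big_map.
  apply: eq_big_seq => I'; rewrite mem_enum inE => I'_ne0.
  by rewrite sem_WOtimes sem_WConst sem_blocks // -size_eq0 -cardE cards_eq0.
have enum_ne0 : enum 'I_n != [::] by rewrite -size_eq0 -cardE card_ord -lt0n.
rewrite !sem_WOtimes sem_WConst sem_blocks //.
have [I_tiles | _] := boolP (tiling S (enum 'I_n) g); last by rewrite !pv_mul0r.
by rewrite (sem_star_full_tiling idem symm Z_S Z_out gCP I_tiles).
Qed.
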